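(* Let $T$ and $T'$ be two different host trees of a hypertree $\mathcal{H}$. Then: (1) there exist edges $e\in E(T)\setminus E(T')$ and $e'\in E(T')\setminus E(T)$ such that $T-e+e'$ is also a host tree of $\mathcal{H}$; (2) if $|E(T)\setminus E(T')|=k$, there exists a sequence $T_1,T_2,\dots,T_{k+1}$ of host trees of $\mathcal{H}$ with $T_1=T$, $T_{k+1}=T'$ and, for $1\le i\le k$, $T_{i+1}=T_i-e_i+e_i'$ where $e_i\in E(T)$ and $e_i'\in E(T')$; furthermore, there is no shorter sequence satisfying the same conditions.
   Context: A hypergraph $\mathcal{H}$ has a finite vertex set $V(\mathcal{H})$ and a finite family of nonempty subsets (edges). A host tree is a tree on $V(\mathcal{H})$ in which every edge of $\mathcal{H}$ induces a connected subgraph; a hypertree is a hypergraph with a host tree. *)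

From mathcomp Require Import all_boot.
Set Implicit Arguments. Unset Strict Implicit. Unset Printing Implicit Defensive.

Definition hypergraph (V : finType) (H : seq {set V}) : Prop :=
  forall h, h \in H -> h != set0.

Definition graph_edges (V : finType) (E : {set {set V}}) : Prop :=
  forall e, e \in E -> #|e| = 2.

Definition adj (V : finType) (E : {set {set V}}) : rel V :=
  [rel x y | [set x; y] \in E].

Definition gconnected (V : finType) (E : {set {set V}}) : Prop :=
  forall x y : V, connect (adj E) x y.

Definition acyclic (V : finType) (E : {set {set V}}) : Prop :=
  forall s : seq V, uniq s -> 3 <= size s -> ~~ cycle (adj E) s.

Definition is_tree (V : finType) (E : {set {set V}}) : Prop :=
  [/\ graph_edges E, gconnected E & acyclic E].

Definition induces_connected (V : finType) (E : {set {set V}}) (h : {set V}) : Prop :=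
  forall x y, x \in h -> y \in h ->
    connect [rel u v | [&& u \in h, v \in h & adj E u v]] x y.

Definition host_tree (V : finType) (H : seq {set V}) (E : {set {set V}}) : Prop :=
  is_tree E /\ forall h, h \in H -> induces_connected E h.

Definition exch (V : finType) (E : {set {set V}}) (e e' : {set V}) : {set {set V}} :=
  (E :\ e) :|: [set e'].

(* a sequence T_0, ..., T_m of host trees from T to T' (indices shifted by one
   w.r.t. the paper), each obtained from the previous one by T_i - e_i + e_i'
   with e_i in E(T), e_i' in E(T') *)
Definition exch_seq (V : finType) (H : seq {set V}) (T T' : {set {set V}})
    (m : nat) (f : nat -> {set {set V}}) : Prop :=
  [/\ f 0 = T, f m = T',
      (forall i, i <= m -> host_tree H (f i)) &
      (forall i, i < m -> exists e e', [/\ e \in T, e' \in T' &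
                                         f i.+1 = exch (f i) e e'])].

From mathcomp Require Import all_boot.
Set Implicit Arguments. Unset Strict Implicit. Unset Printing Implicit Defensive.

(* Let e = xy be an edge of the host tree T that is not in T'. Removing e splits T
   into the side of x and the side of y, and the path from x to y in T' leaves the
   side of x through some edge f = uv; T - e + f is again a tree because f rejoins
   the two sides.  Since f lies on the T'-path from x to y, every hyperedge h that
   contains x and y, being connected in T', contains u and v, so f also rejoins the
   two halves of h in T - e; hyperedges not containing both x and y never used e.
   Each such exchange removes one edge of T \ T', and no exchange can remove more
   than one. *)

Lemma connect_ind (T : finType) (e : rel T) (P : T -> Prop) x :
  P x -> (forall a b, e a b -> P a -> P b) -> forall y, connect e x y -> P y.
Proof.
move=> Px eP _ /connectP[p + ->]; elim: p x Px => //= z p IHp x Px /andP[exz ez].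
exact: IHp (eP _ _ exz Px) ez.
Qed.

Lemma path_crossing (T : Type) (e : rel T) (P : pred T) x p :
  path e x p -> P x -> ~~ P (last x p) ->
  exists p1 y p2, [/\ p = p1 ++ y :: p2, P (last x p1) & ~~ P y].
Proof.
elim: p x => [|z p IHp] x /=; first by move=> _ ->.
case/andP=> _ ez Px; case Pz: (P z); last by exists [::], z, p; rewrite Pz.
by case/(IHp z ez Pz) => p1 [y [p2 [-> Pp1 Py]]]; exists (z :: p1), y, p2.
Qed.

Section Graphs.
Variable V : finType.
Implicit Types (E F T : {set {set V}}) (h : {set V}).

Lemma adjE E a b : adj E a b = ([set a; b] \in E).
Proof. by []. Qed.

Lemma adjC E : symmetric (adj E).
Proof. by move=> a b; rewrite !adjE setUC. Qed.

Lemma connect_adjC E : connect_sym (adj E).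
Proof. exact/sym_connect_sym/adjC. Qed.

Lemma connect_adj_subset E F : E \subset F -> subrel (connect (adj E)) (connect (adj F)).
Proof. by move=> EF; apply: connect_sub => a b ab; apply/connect1/(subsetP EF). Qed.

Definition induced_adj E h : rel V := [rel a b | [&& a \in h, b \in h & adj E a b]].
Arguments induced_adj E h /.

Lemma induced_adjC E h : symmetric (induced_adj E h).
Proof. by move=> a b /=; rewrite adjC andbCA. Qed.

Lemma connect_induced_adjC E h : connect_sym (induced_adj E h).
Proof. exact/sym_connect_sym/induced_adjC. Qed.

Lemma connect_induced_subset E F h :
  E \subset F -> subrel (connect (induced_adj E h)) (connect (induced_adj F h)).
Proof.
move=> EF; apply: connect_sub => a b /and3P[ah bh ab].
by apply: connect1; rewrite /= ah bh; apply: (subsetP EF).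
Qed.

Lemma connect_induced_adj E h : subrel (connect (induced_adj E h)) (connect (adj E)).
Proof. by apply: connect_sub => a b /and3P[_ _]; apply: connect1. Qed.

Lemma gconnected_induced E : gconnected E <-> induces_connected E setT.
Proof.
have eq_setT : connect (induced_adj E setT) =2 connect (adj E).
  by apply: eq_connect => a b; rewrite /= !in_setT.
by split=> cE a b; rewrite ?eq_setT //; move: (cE a b); rewrite -eq_setT; apply.
Qed.

Lemma path_adj_setD1 E (f : {set V}) c x p :
  c \in f -> c \notin x :: p -> path (adj E) x p -> path (adj (E :\ f)) x p.
Proof.
move=> cf cxp; apply: (sub_in_path (P := predC (pred1 c))); last first.
  by rewrite all_predC has_pred1.
move=> a b /= /eqP ac /eqP bc; rewrite /adj /= in_setD1 => ->; rewrite andbT.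
by apply: contraTneq cf => <-; apply/set2P => -[] /esym.
Qed.

Lemma connect_induced_setD1 E h x y z :
  connect (induced_adj E h) x z ->
  connect (induced_adj (E :\ [set x; y]) h) x z ||
  connect (induced_adj (E :\ [set x; y]) h) y z.
Proof.
elim/connect_ind; first by rewrite connect0.
move=> p q /and3P[ph qh pq]; case: (eqVneq [set p; q] [set x; y]) => [pqe _ | pqe].
  by have := set22 p q; rewrite pqe => /set2P[] ->; rewrite connect0 ?orbT.
have pq' : induced_adj (E :\ [set x; y]) h p q by rewrite /= ph qh adjE in_setD1 pqe.
by case/orP=> c; rewrite (connect_trans c (connect1 pq')) ?orbT.
Qed.

Lemma connect_adj_setU1 F u v a b :
  connect (adj (F :|: [set [set u; v]])) a b ->
  [|| connect (adj F) a b, connect (adj F) a u && connect (adj F) v b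
    | connect (adj F) a v && connect (adj F) u b].
Proof.
set C := connect (adj F); pose Q := C a u || C a v.
have uvQ w : w \in [set u; v] -> C a w -> Q by case/set2P=> -> aw; rewrite /Q aw ?orbT.
have uvC w : w \in [set u; v] -> C u w || C v w.
  by case/set2P=> ->; rewrite /C connect0 ?orbT.
move=> ab; have : C a b || Q && (C u b || C v b).
  elim/connect_ind: ab; first by rewrite /C connect0.
  move=> p q; rewrite adjE in_setU in_set1 => /orP[pq | /eqP pqf].
    have step w : C w p -> C w q by move/connect_trans; apply; apply: connect1.
    by case/orP=> [/step -> // | /andP[-> /orP[] /step ->]]; rewrite ?orbT.
  have [pf qf] : p \in [set u; v] /\ q \in [set u; v] by rewrite -pqf set21 set22.
  by case/orP=> [/(uvQ _ pf) | /andP[]] Qt; rewrite Qt (uvC _ qf) orbT.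
case/orP=> [-> // | /andP[/orP[] aw /orP[] wb]].
- by rewrite /C (connect_trans aw wb).
- by rewrite aw wb orbT.
- by rewrite aw wb !orbT.
- by rewrite /C (connect_trans aw wb).
Qed.

Definition all_bridges E :=
  forall a b, a != b -> [set a; b] \in E -> ~~ connect (adj (E :\ [set a; b])) a b.

Lemma acyclic_bridges E : acyclic E -> all_bridges E.
Proof.
move=> acE a b ab abE; apply/negP => /connectP[p0 /shortenP[p pE up _] bl].
have pE' : path (adj E) a p.
  by apply: sub_path pE => s t; rewrite !adjE in_setD1 => /andP[].
case: p => [|w [|w' q]] in pE up pE' bl *.
- by rewrite bl eqxx in ab.
- by move: pE; rewrite /= -[w]/(last a [:: w]) -bl adjE in_setD1 eqxx.
have := acE (a :: w :: w' :: q) up isT.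
by rewrite /cycle rcons_path pE' -bl adjE setUC abE.
Qed.

Lemma bridges_acyclic E : all_bridges E -> acyclic E.
Proof.
move=> bE [|a [|p1 [|p2 q]]] // up _; apply/negP.
rewrite /cycle rcons_path => /andP[/= /andP[ap1 pE]].
set b := last p2 q => ba.
move: up; rewrite /= !inE !negb_or => /and4P[/and3P[ap1' ap2 aq] /andP[p1p2 p1q] _ _].
have bp : b \in p2 :: q := mem_last p2 q.
have ab : a != b by apply: contraTneq bp => <-; rewrite inE negb_or ap2.
have p1b : p1 != b by apply: contraTneq bp => <-; rewrite inE negb_or p1p2.
have abE : [set a; b] \in E by rewrite setUC -adjE.
have pE' : path (adj (E :\ [set a; b])) p1 (p2 :: q).
  by apply: (path_adj_setD1 (c := a)); rewrite ?set21 // !inE !negb_or ap1' ap2 aq.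
apply: (negP (bE a b ab abE)); apply/connectP; exists [:: p1, p2 & q] => //.
apply/andP; split=> //; rewrite adjE in_setD1 -adjE ap1 andbT.
apply: contraNneq p1b => abp; have := set22 a p1; rewrite abp => /set2P[pa|->//].
by rewrite pa eqxx in ap1'.
Qed.

Lemma separating_edge_subset E h (f : {set V}) x y :
  connect (induced_adj E h) x y -> ~~ connect (adj (E :\ f)) x y -> f \subset h.
Proof.
move=> /connectP[p hp ->] nxy.
have [p1 [w [p2 [pe zP wP]]]] := path_crossing hp (connect0 _ x) nxy.
move: hp; rewrite pe cat_path => /andP[_ /= /andP[/and3P[zh wh zw] _]].
case: (eqVneq [set last x p1; w] f) => [<- | zwf].
  by apply/subsetP => t /set2P[] ->.
by move: wP; rewrite (connect_trans zP) // connect1 // adjE in_setD1 zwf.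
Qed.

Lemma exists_exchange_edge T T' x y :
  all_bridges T' -> gconnected T' -> ~~ connect (adj (T :\ [set x; y])) x y ->
  exists u v, [/\ [set u; v] \in T', connect (adj (T :\ [set x; y])) x u,
    ~~ connect (adj (T :\ [set x; y])) x v & ~~ connect (adj (T' :\ [set u; v])) x y].
Proof.
move=> bT' cT' nxy; have /connectP[p0 /shortenP[p pT' up _] yl] := cT' x y.
have nxp : ~~ connect (adj (T :\ [set x; y])) x (last x p) by rewrite -yl.
have [p1 [v [p2 [pe xu xv]]]] := path_crossing pT' (connect0 _ x) nxp.
set u := last x p1 in xu; exists u, v.
move: pT' up; rewrite pe cat_path -cat_cons cat_uniq.
move=> /andP[p1T' /= /andP[uvT' p2T']] /and3P[_ /norP[vp1 /hasPn p2p1] _].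
have uv : u != v by apply: contraNneq xv => <-.
have up2 : u \notin v :: p2.
  by rewrite inE negb_or uv; apply: contraTN (mem_last x p1) => /p2p1.
have ux : connect (adj (T' :\ [set u; v])) u x.
  rewrite connect_adjC; apply/connectP; exists p1 => //.
  by apply: (path_adj_setD1 (c := v)); rewrite ?set22.
have yv : connect (adj (T' :\ [set u; v])) y v.
  rewrite connect_adjC; apply/connectP; exists p2; last by rewrite yl pe last_cat.
  by apply: (path_adj_setD1 (c := u)); rewrite ?set21.
split=> //; apply/negP => xy; apply: (negP (bT' u v uv uvT')).
exact: connect_trans ux (connect_trans xy yv).
Qed.

Section Exchange.
Variables (T : {set {set V}}) (x y u v : V).
Local Notation e := [set x; y].
Local Notation f := [set u; v].
Hypothesis nxy : ~~ connect (adj (T :\ e)) x y.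
Hypothesis xu : connect (adj (T :\ e)) x u.
Hypothesis nxv : ~~ connect (adj (T :\ e)) x v.

Lemma induces_connected_exch h :
  (x \in h -> y \in h -> f \subset h) -> induces_connected T h ->
  induces_connected (exch T e f) h.
Proof.
move=> hf hT; have lift := connect_induced_subset (h := h) (subsetUl (T :\ e) [set f]).
have [/andP[xh yh] | nxyh] := boolP ((x \in h) && (y \in h)); last first.
  move=> a b ah bh; apply: lift; move: (hT a b ah bh).
  apply: connect_sub => p q /and3P[ph qh pq].
  apply: connect1; rewrite /= ph qh adjE in_setD1 -adjE pq andbT.
  apply: contraNneq nxyh => pqe; have /subsetP eh : e \subset h.
    by rewrite -pqe; apply/subsetP => t /set2P[] ->.
  by rewrite !eh ?set21 ?set22.
have /subsetP fh := hf xh yh; have [uh vh] := (fh u (set21 u v), fh v (set22 u v)).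
have xy_roots z : z \in h ->
    connect (induced_adj (T :\ e) h) x z || connect (induced_adj (T :\ e) h) y z.
  by move=> zh; apply: connect_induced_setD1 (hT x z xh zh).
have xu' : connect (induced_adj (T :\ e) h) x u.
  case/orP: (xy_roots u uh) => // /connect_induced_adj yu.
  by case/negP: nxy; rewrite connect_adjC in yu; apply: connect_trans xu yu.
have yv' : connect (induced_adj (T :\ e) h) y v.
  by case/orP: (xy_roots v vh) => // /connect_induced_adj xv; case/negP: nxv.
have uv1 : induced_adj (exch T e f) h u v.
  by rewrite /= uh vh adjE in_setU in_set1 eqxx orbT.
have xy1 : connect (induced_adj (exch T e f) h) x y.
  apply: connect_trans (lift _ _ xu') (connect_trans (connect1 uv1) _).
  by rewrite connect_induced_adjC; apply: lift.
have xz1 z : z \in h -> connect (induced_adj (exch T e f) h) x z.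
  by move=> zh; case/orP: (xy_roots z zh) => /lift // yz; apply: connect_trans xy1 yz.
move=> a b ah bh; apply: connect_trans (xz1 b bh).
by rewrite connect_induced_adjC xz1.
Qed.

Lemma gconnected_exch : gconnected T -> gconnected (exch T e f).
Proof.
move/gconnected_induced => cT; apply/gconnected_induced.
by apply: induces_connected_exch => // _ _; apply: subsetT.
Qed.

Lemma all_bridges_exch : all_bridges T -> all_bridges (exch T e f).
Proof.
move=> bT a b ab.
have nuv : ~~ connect (adj (T :\ e)) u v by apply: contra nxv; apply: connect_trans.
have fT : f \notin T :\ e by apply: contra nuv => fT; apply: connect1.
rewrite /exch in_setU in_set1 => /orP[abT | /eqP abf]; last first.
  rewrite abf setUC setU1K //; move: nuv ab.
  by have := set21 a b; have := set22 a b; rewrite abf => /set2P[]-> /set2P[]->;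
    rewrite ?eqxx // connect_adjC.
have side z w : connect (adj (T :\ e)) z w ->
    connect (adj (T :\ e)) x z = connect (adj (T :\ e)) x w.
  by move=> zw; apply: same_connect_r zw x; apply: connect_adjC.
have abTe : connect (adj (T :\ e)) a b by apply: connect1.
have GTe := connect_adj_subset (subD1set (T :\ e) [set a; b]).
have sub : exch T e f :\ [set a; b] \subset (T :\ e :\ [set a; b]) :|: [set f].
  by apply/subsetP => t; rewrite !inE => /andP[-> /orP[] ->]; rewrite ?orbT.
apply/negP => /(connect_adj_subset sub)/connect_adj_setU1.
case/or3P=> [abG | /andP[au vb] | /andP[av ub]].
- have /setD1P[_ abT'] := abT; case/negP: (bT a b ab abT').
  by move: abG; apply: connect_adj_subset; apply/setSD/subD1set.
- case/negP: nxv.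
  by rewrite (side _ _ (GTe _ _ vb)) -(side _ _ abTe) (side _ _ (GTe _ _ au)).
- case/negP: nxv.
  by rewrite -(side _ _ (GTe _ _ av)) (side _ _ abTe) -(side _ _ (GTe _ _ ub)).
Qed.

Lemma is_tree_exch : is_tree T -> is_tree (exch T e f).
Proof.
case=> gT cT aT; split.
- move=> g; rewrite /exch in_setU in_set1 => /orP[/setD1P[_ /gT] // | /eqP ->].
  by rewrite cards2; case: eqP => // uv; case/negP: nxv; rewrite -uv.
- exact: gconnected_exch.
- exact/bridges_acyclic/all_bridges_exch/acyclic_bridges.
Qed.

End Exchange.

Lemma host_tree_exchange H T T' e :
  host_tree H T -> host_tree H T' -> e \in T :\: T' ->
  exists2 e', e' \in T' :\: T & host_tree H (exch T e e').
Proof.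
move=> [tT hT] [[_ cT' aT'] hT'] /setDP[eT eT']; have [gT _ aT] := tT.
have /eqP/cards2P[x [y [xy exy]]] := gT e eT; subst e.
have nxy := acyclic_bridges aT xy eT.
have [u [v [uvT' xu nxv nxyT']]] := exists_exchange_edge (acyclic_bridges aT') cT' nxy.
exists [set u; v].
  rewrite inE uvT' andbT; apply: contra nxv => uvT.
  rewrite (connect_trans xu) // connect1 // adjE in_setD1 uvT andbT.
  by apply: contraNneq eT' => <-.
split; first exact: is_tree_exch.
move=> h hH; apply: induces_connected_exch (hT h hH) => // xh yh.
by move: (hT' h hH x y xh yh) => /separating_edge_subset; apply.
Qed.

(* If T were a proper subgraph of T', an exchange from T' towards T would produce
   an edge of T \ T'. *)
Lemma host_trees_setD_neq0 H T T' :
  host_tree H T -> host_tree H T' -> T != T' -> T :\: T' != set0.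
Proof.
move=> hT hT'; apply: contraNneq => /eqP; rewrite setD_eq0 => TT'.
have [TT | [e eT'T]] := set_0Vmem (T' :\: T).
  by rewrite eqEsubset TT' -setD_eq0 TT eqxx.
by have [e' /setDP[/(subsetP TT') ->]] := host_tree_exchange hT' hT eT'T.
Qed.

Lemma card_setD_exch E F e e' : #|E :\: F| <= #|exch E e e' :\: F|.+1.
Proof.
rewrite (cardsD1 e) -add1n leq_add ?leq_b1 //; apply: subset_leq_card.
by apply/subsetP => t; rewrite /exch !inE => /and3P[-> -> ->].
Qed.

Lemma exch_seq_length H T T' m f :
  exch_seq H T T' m f -> #|T :\: T'| <= m.
Proof.
case=> f0 fm _ steps.
suff le_i i : i <= m -> #|T :\: T'| <= #|f i :\: T'| + i.
  by have := le_i m (leqnn m); rewrite fm setDv cards0.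
elim: i => [_ | i IHi im]; first by rewrite f0 addn0.
have [e [e' [_ _ ->]]] := steps i im.
by rewrite addnS -addSn (leq_trans (IHi (ltnW im))) // leq_add2r card_setD_exch.
Qed.

Lemma exch_seq_exists H T T' :
  host_tree H T -> host_tree H T' -> exists f, exch_seq H T T' #|T :\: T'| f.
Proof.
move=> hT hT'.
suff: forall k T0, host_tree H T0 -> #|T0 :\: T'| = k -> exists f,
    [/\ f 0 = T0, f k = T', forall i, i <= k -> host_tree H (f i)
      & forall i, i < k -> exists e e',
          [/\ e \in T0 :\: T', e' \in T' & f i.+1 = exch (f i) e e']].
  case/(_ _ T hT erefl) => f [f0 fk hf steps]; exists f; split=> // i.
  by case/steps => e [e' [/setDP[eT _] e'T' ->]]; exists e, e'.
elim=> [|k IHk] T0 hT0 k_T0.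
  case: (eqVneq T0 T') => [-> | /(host_trees_setD_neq0 hT0 hT')].
    by exists (fun=> T'); split=> // *.
  by rewrite -card_gt0 k_T0.
have /set0Pn[e eT0] : T0 :\: T' != set0 by rewrite -card_gt0 k_T0.
have [e' /setDP[e'T' _] hT1] := host_tree_exchange hT0 hT' eT0.
have D : exch T0 e e' :\: T' = (T0 :\: T') :\ e.
  apply/setP => t; rewrite /exch !inE.
  by case: (eqVneq t e') => [-> | _]; rewrite ?e'T' ?andbF // orbF andbCA.
have k_T1 : #|exch T0 e e' :\: T'| = k.
  by move: k_T0; rewrite D (cardsD1 e) eT0 add1n => -[].
have [f [f0 fk hf steps]] := IHk _ hT1 k_T1.
exists (fun i => if i is i'.+1 then f i' else T0); split=> //; first by case.
case=> [_ | i /steps[e2 [e2' [e2T e2'T' ->]]]]; first by exists e, e'; rewrite f0.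
by exists e2, e2'; move: e2T; rewrite D => /setD1P[].
Qed.

End Graphs.

Theorem mainTheorem19 (V : finType) (H : seq {set V}) (T T' : {set {set V}}) :
  hypergraph H -> host_tree H T -> host_tree H T' -> T != T' ->
  (exists e e', [/\ e \in T :\: T', e' \in T' :\: T & host_tree H (exch T e e')]) /\
  (forall k, #|T :\: T'| = k ->
     (exists f, exch_seq H T T' k f) /\
     (forall m f, exch_seq H T T' m f -> k <= m)).
Proof.
move=> _ hT hT' TT'; split.
  have /set0Pn[e eTT'] := host_trees_setD_neq0 hT hT' TT'.
  by have [e' e'T'T hT1] := host_tree_exchange hT hT' eTT'; exists e, e'.
move=> k <-; split; first exact: exch_seq_exists.
by move=> m f /exch_seq_length.
Qed.
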